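(* Let $E$ be a real vector space, $M$ a linear subspace of $E$, $S$ a sublinear functional on $E$, $P(x)=-S(-x)$ for every $x\in E$, $T(x)=\inf_{y\in E}\{S(x+y)-P(y)\}$ for $x\in E$, and $f_0$ a linear functional on $M$. Then the conditions ''$P(x)\le S(x)$ for every $x\in E$, and $P(x)\le f_0(x)\le S(x)$ for every $x\in M$'' hold if and only if $f_0(x)\le T(x)$ for every $x\in M$.
   Context: A functional $S:E\to\mathbb{R}$ is sublinear if $S(x+y)\le S(x)+S(y)$ for all $x,y\in E$ and $S(\alpha x)=\alpha S(x)$ for all $x\in E$, $\alpha>0$. *)

From HB Require Import structures.
From mathcomp Require Import all_boot all_order all_algebra.
From mathcomp Require Import all_classical all_reals ereal.
Set Implicit Arguments. Unset Strict Implicit. Unset Printing Implicit Defensive.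
Import Order.TTheory GRing.Theory Num.Theory.
Local Open Scope ring_scope.
Local Open Scope classical_set_scope.

Definition sublinear (R : realType) (E : lmodType R) (S : E -> R) : Prop :=
  (forall x y : E, S (x + y) <= S x + S y) /\
  (forall (x : E) (a : R), 0 < a -> S (a *: x) = a * S x).

Definition is_subspace (R : realType) (E : lmodType R) (M : set E) : Prop :=
  M 0 /\ (forall (a : R) (x y : E), M x -> M y -> M (a *: x + y)).

(* f0 is a linear functional on M (values off M are irrelevant). *)
Definition linear_on (R : realType) (E : lmodType R) (M : set E) (f0 : E -> R) : Prop :=
  forall (a : R) (x y : E), M x -> M y -> f0 (a *: x + y) = a * f0 x + f0 y.

Definition Pdual_fun (R : realType) (E : lmodType R) (S : E -> R) (x : E) : R := - S (- x).

Definition Tinf_fun (R : realType) (E : lmodType R) (S : E -> R) (x : E) : \bar R :=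
  ereal_inf [set ((S (x + y) - Pdual_fun S y)%R)%:E | y in [set: E]].

From HB Require Import structures.
From mathcomp Require Import all_boot all_order all_algebra.
From mathcomp Require Import all_classical all_reals ereal.
Set Implicit Arguments. Unset Strict Implicit. Unset Printing Implicit Defensive.
Import Order.TTheory GRing.Theory Num.Theory.
Local Open Scope ring_scope.
Local Open Scope classical_set_scope.

(* For sublinear S, subadditivity gives S x <= S (x + y) + S (-y) = S (x + y) - P y,
   with equality at y = 0, so T = S. The condition f0 <= T on M therefore says
   f0 <= S on M; linearity of f0 turns f0 (-x) <= S (-x) into P x <= f0 x, and
   P <= S always holds since 0 = S 0 <= S x + S (-x). *)

Section Sublinear.
Variables (R : realType) (E : lmodType R) (S : E -> R).
Hypothesis hS : sublinear S.

Lemma sublinear0 : S 0 = 0.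
Proof.
have := hS.2 0 2 (ltr0Sn R 1); rewrite scaler0 mulr_natl mulr2n => /eqP.
by rewrite eq_sym -subr_eq0 addrK => /eqP.
Qed.

Lemma Pdual0 : Pdual_fun S 0 = 0.
Proof. by rewrite /Pdual_fun oppr0 sublinear0 oppr0. Qed.

Lemma sublinear_le_shift (x y : E) : S x <= S (x + y) - Pdual_fun S y.
Proof. by rewrite /Pdual_fun opprK -{1}(addrK y x) hS.1. Qed.

Lemma Pdual_le_sublinear (x : E) : Pdual_fun S x <= S x.
Proof. by have := sublinear_le_shift 0 x; rewrite sublinear0 add0r subr_ge0. Qed.

Lemma Tinf_sublinear (x : E) : Tinf_fun S x = (S x)%:E.
Proof.
apply/eqP; rewrite eq_le; apply/andP; split.
  by apply: ereal_inf_lbound; exists 0 => //; rewrite addr0 Pdual0 subr0.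
by apply: le_ereal_inf_tmp => _ [y _ <-]; rewrite lee_fin sublinear_le_shift.
Qed.

End Sublinear.

Section LinearOn.
Variables (R : realType) (E : lmodType R) (M : set E) (f0 : E -> R).
Hypotheses (hM : is_subspace M) (hf0 : linear_on M f0).

Lemma is_subspaceN (x : E) : M x -> M (- x).
Proof. by move=> Mx; have := hM.2 (-1) x 0 Mx hM.1; rewrite addr0 scaleN1r. Qed.

Lemma linear_on0 : f0 0 = 0.
Proof.
have := hf0 1 hM.1 hM.1; rewrite scaler0 addr0 mul1r => /eqP.
by rewrite eq_sym -subr_eq0 addrK => /eqP.
Qed.

Lemma linear_onN (x : E) : M x -> f0 (- x) = - f0 x.
Proof.
by move=> Mx; have := hf0 (-1) Mx hM.1; rewrite addr0 scaleN1r linear_on0 addr0 mulN1r.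
Qed.

Lemma Pdual_le_linear_on (S : E -> R) (x : E) :
  (forall z, M z -> f0 z <= S z) -> M x -> Pdual_fun S x <= f0 x.
Proof.
by move=> hfS Mx; rewrite /Pdual_fun lerNl -linear_onN //; exact/hfS/is_subspaceN.
Qed.

End LinearOn.

Theorem corollary4p1 (R : realType) (E : lmodType R) (M : set E) (S : E -> R)
  (f0 : E -> R) (hM : is_subspace M) (hS : sublinear S) (hf0 : linear_on M f0) :
  ((forall x : E, Pdual_fun S x <= S x) /\
   (forall x : E, M x -> Pdual_fun S x <= f0 x /\ f0 x <= S x))
  <-> (forall x : E, M x -> ((f0 x)%:E <= Tinf_fun S x)%E).
Proof.
split=> [[_ hPfS] x Mx | hfT].
  by rewrite Tinf_sublinear // lee_fin; exact: (hPfS x Mx).2.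
have hfS z : M z -> f0 z <= S z.
  by move=> Mz; have := hfT z Mz; rewrite Tinf_sublinear // lee_fin.
split=> [x | x Mx]; first exact: Pdual_le_sublinear.
by split; [exact: (Pdual_le_linear_on hM hf0 hfS Mx) | exact: hfS].
Qed.
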